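(* For every $k\ge1$, $n\ge0$ and nonnegative integers $m_1,\dots,m_k$, $$\mathcal D^{ss}_k(m_1,\dots,m_k;n)=N\Big(\sum_{i=1}^k m_i+k-1;\,n\Big).$$
   Context: A partition is a finite nonincreasing sequence $\lambda=(\lambda_1,\dots,\lambda_r)$ of positive integers (the empty partition is allowed); $l(\lambda)=r$, $|\lambda|=\sum_i\lambda_i$, $\lambda_1$ the largest part. For integers $m$ and $n\ge0$, $N(m;n)$ is the number of partitions $\lambda$ of $n$ with $\lambda_1-l(\lambda)=m$ (the empty partition of $0$ having rank $0$). Let $k\ge1$. A $k$-marked Durfee symbol of $n$ is an array $\eta=\begin{pmatrix}\alpha^k,&\dots,&\alpha^1\\ \beta^k,&\dots,&\beta^1\end{pmatrix}_D$ consisting of an integer $D\ge0$ and $2k$ partitions $\alpha^i,\beta^i$ with $\sum_{i=1}^k(|\alpha^i|+|\beta^i|)+D^2=n$, such that: (1) $\alpha^i$ is nonempty for $1\le i<k$; (2) for $1\le i<k$ every part of $\beta^i$ is $\le\alpha^i_1$, and for $2\le i\le k$ every part of $\alpha^i$ and every part of $\beta^i$ is $\ge\alpha^{i-1}_1$; (3) all parts of $\alpha^k$ and $\beta^k$ are $\le D$. The pair $(\alpha^i,\beta^i)$ is the $i$th vector. The $i$th rank is $\rho_i(\eta)=l(\alpha^i)-l(\beta^i)-1$ for $1\le i<k$ and $\rho_k(\eta)=l(\alpha^k)-l(\beta^k)$. A pair of partitions $(\alpha,\beta)$ is strict shifted if $l(\alpha)>l(\beta)$ and $\alpha_{i+1}>\beta_i$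 for $1\le i\le l(\beta)$. A $k$-marked Durfee symbol is strict shifted if each of its vectors $(\alpha^i,\beta^i)$ with $1\le i\le k-1$ is strict shifted. $\mathcal D^{ss}_k(m_1,\dots,m_k;n)$ denotes the number of $k$-marked strict shifted Durfee symbols of $n$ with $i$th rank $m_i$ for all $i$. *)

From mathcomp Require Import all_boot all_order all_algebra.
Set Implicit Arguments. Unset Strict Implicit. Unset Printing Implicit Defensive.
Import GRing.Theory Num.Theory.

Definition is_partition (s : seq nat) : bool :=
  sorted geq s && all (fun x => 0 < x) s.

Definition largest (s : seq nat) : nat := head 0 s.

Definition prank (s : seq nat) : int := (Posz (largest s) - Posz (size s))%R.

Fixpoint seqs_len (T : Type) (l : nat) (vals : seq T) : seq (seq T) :=
  match l with
  | 0 => [:: [::]]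
  | l'.+1 => [seq x :: s | x <- vals, s <- seqs_len l' vals]
  end.

(* All sequences of length <= n with entries in 1..n : every partition of
   any j <= n occurs in this list exactly once. *)
Definition bseqs (n : nat) : seq (seq nat) :=
  flatten [seq seqs_len l (iota 1 n) | l <- iota 0 n.+1].

Definition Nrank (m : int) (n : nat) : nat :=
  count (fun s => [&& is_partition s, sumn s == n & prank s == m]) (bseqs n).

(* A k-marked Durfee symbol is represented by (D, al, be) where al, be are
   sequences of length k and the i-th vector (alpha^i, beta^i), 1 <= i <= k,
   is (nth [::] al (i-1), nth [::] be (i-1)). *)
Definition is_kmds (k n D : nat) (al be : seq (seq nat)) : bool :=
  [&& size al == k, size be == k,
      all is_partition al, all is_partition be,
      sumn (map sumn al) + sumn (map sumn be) + D ^ 2 == n,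
      (* (1) and first half of (2): for 1 <= i < k *)
      all (fun i => (i.+1 < k) ==>
         ((nth [::] al i != [::]) &&
          all (fun b => b <= largest (nth [::] al i)) (nth [::] be i))) (iota 0 k),
      (* second half of (2): for 2 <= i <= k (0-indexed i >= 1) *)
      all (fun i => (0 < i) ==>
         (all (fun a => largest (nth [::] al i.-1) <= a) (nth [::] al i) &&
          all (fun b => largest (nth [::] al i.-1) <= b) (nth [::] be i))) (iota 0 k)
    & (* (3), read as in Andrews' definition: every part of every
         alpha^i, beta^i is <= D *)
      all (all (fun a => a <= D)) al &&
      all (all (fun b => b <= D)) be].

(* i-th rank, with 0-indexed i (i.e. rho_{i+1}) *)
Definition kmds_rank (k : nat) (al be : seq (seq nat)) (i : nat) : int :=
  if i.+1 < k then
    (Posz (size (nth [::] al i)) - Posz (size (nth [::] be i)) - 1)%R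
  else (Posz (size (nth [::] al i)) - Posz (size (nth [::] be i)))%R.

Definition strict_shifted (a b : seq nat) : bool :=
  (size b < size a) &&
  all (fun j => nth 0 b j < nth 0 a j.+1) (iota 0 (size b)).

Definition is_ss_kmds (k n D : nat) (al be : seq (seq nat)) : bool :=
  is_kmds k n D al be &&
  all (fun i => (i.+1 < k) ==> strict_shifted (nth [::] al i) (nth [::] be i)) (iota 0 k).

(* D^ss_k(m_1,...,m_k; n), with m_i = nth 0 m (i-1).  All parts of a
   Durfee symbol of n are <= n, all partitions have length <= n and D <= n,
   so the candidates below cover every symbol, each exactly once. *)
Definition Dss (k : nat) (m : seq nat) (n : nat) : nat :=
  count (fun t : nat * (seq (seq nat) * seq (seq nat)) =>
           let: (D, (al, be)) := t in
           is_ss_kmds k n D al be &&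
           all (fun i => kmds_rank k al be i == Posz (nth 0 m i)) (iota 0 k))
    [seq (D, p) | D <- iota 0 n.+1,
                  p <- [seq (al, be) | al <- seqs_len k (bseqs n),
                                       be <- seqs_len k (bseqs n)]].

(* The proof is by induction on k through two bijections.
   - Merging (k >= 2).  The last two vectors (alpha^(k-1), beta^(k-1)) and
     (alpha^k, beta^k) of a strict shifted symbol are replaced by the single
     vector (alpha^k ++ alpha^(k-1), beta^k ++ beta^(k-1)).  This is a
     bijection onto the strict shifted (k-1)-marked symbols whose last rank
     is m_(k-1) + m_k + 1: the cut is recovered as one past the last index j
     where the strict shift inequality beta_j < alpha_(j+m_k+1) fails.
   - The Durfee square (k = 1).  (D, alpha, beta) corresponds to the
     partition with a D x D Durfee square, the columns alpha to its right
     and the rows beta below it; its rank is l(alpha) - l(beta). *)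

From mathcomp Require Import all_boot all_order all_algebra zify.
Import GRing.Theory.
Set Implicit Arguments. Unset Strict Implicit. Unset Printing Implicit Defensive.

Lemma count_bij (T1 T2 : eqType) (P1 : pred T1) (P2 : pred T2) s1 s2
  (f : T1 -> T2) (g : T2 -> T1) :
  uniq s1 -> uniq s2 -> (forall x, P1 x -> x \in s1) -> (forall y, P2 y -> y \in s2) ->
  (forall x, P1 x -> P2 (f x) /\ g (f x) = x) ->
  (forall y, P2 y -> P1 (g y) /\ f (g y) = y) ->
  count P1 s1 = count P2 s2.
Proof.
move=> u1 u2 c1 c2 fK gK; rewrite -!size_filter.
suff pe : perm_eq (map f (filter P1 s1)) (filter P2 s2) by rewrite -(perm_size pe) size_map.
apply: uniq_perm; last 1 first.
- move=> y; apply/mapP/idP.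
  + case=> x; rewrite mem_filter => /andP[Px _] ->.
    by rewrite mem_filter (fK x Px).1 c2 // (fK x Px).1.
  + rewrite mem_filter => /andP[Py _]; exists (g y); last by rewrite (gK y Py).2.
    by rewrite mem_filter (gK y Py).1 c1 // (gK y Py).1.
- rewrite map_inj_in_uniq ?filter_uniq // => x y.
  rewrite !mem_filter => /andP[Px _] /andP[Py _] e.
  by rewrite -(fK x Px).2 e (fK y Py).2.
- by rewrite filter_uniq.
Qed.

Lemma mem_seqs_len (T : eqType) l (vals : seq T) s :
  (s \in seqs_len l vals) = (size s == l) && all (mem vals) s.
Proof.
elim: l s => [|l IH] [|x s] //=.
- by apply/allpairsP => -[[y t] [_ _ //]].
- apply/allpairsP/idP.
  + case=> -[y t] [/= Hy Ht [-> ->]]; move: Ht; rewrite IH eqSS => /andP[-> ->].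
    by rewrite Hy.
  + rewrite eqSS => /andP[Hs /andP[Hx Ha]]; exists (x, s); split => //.
    by rewrite IH Hs Ha.
Qed.

Lemma uniq_seqs_len (T : eqType) l (vals : seq T) : uniq vals -> uniq (seqs_len l vals).
Proof.
move=> uv; elim: l => [|l IH] //=.
by apply: allpairs_uniq => // -[x1 s1] [x2 s2] _ _ /= [-> ->].
Qed.

Lemma mem_bseqs n s : (s \in bseqs n) = (size s <= n) && all (fun x => 0 < x <= n) s.
Proof.
have mem_vals x : (x \in iota 1 n) = (0 < x <= n) by rewrite mem_iota add1n ltnS.
apply/flatten_mapP/idP.
- case=> l; rewrite mem_iota add0n ltnS mem_seqs_len => /andP[_ Hl] /andP[/eqP -> Ha].
  by rewrite Hl; apply/allP => x /(allP Ha); rewrite /= mem_vals.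
- move=> /andP[Hs Ha]; exists (size s); first by rewrite mem_iota add0n ltnS.
  by rewrite mem_seqs_len eqxx; apply/allP => x /(allP Ha); rewrite /= mem_vals.
Qed.

Lemma uniq_bseqs n : uniq (bseqs n).
Proof.
rewrite /bseqs; elim: (iota 0 n.+1) (iota_uniq 0 n.+1) => [|l ls IH] //= /andP[lls uls].
rewrite cat_uniq uniq_seqs_len ?iota_uniq // IH // andbT.
apply/hasPn => s /flatten_mapP [l' Hl']; rewrite !mem_seqs_len => /andP[/eqP sl' _].
by apply/negP => /andP[/eqP sl _]; move: lls; rewrite -sl sl' Hl'.
Qed.

Lemma leq_sumn_mem (s : seq nat) x : x \in s -> x <= sumn s.
Proof.
elim: s => [|y s IH] //=; rewrite inE => /orP[/eqP ->|/IH H]; first exact: leq_addr.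
exact: leq_trans H (leq_addl _ _).
Qed.

Lemma size_le_sumn (s : seq nat) : all (fun x => 0 < x) s -> size s <= sumn s.
Proof.
elim: s => [|y s IH] //= /andP[Hy Hs].
by rewrite -add1n; apply: leq_add => //; exact: IH.
Qed.

Lemma partition_in_bseqs n a : is_partition a -> sumn a <= n -> a \in bseqs n.
Proof.
move=> /andP[_ Hp] Hn; rewrite mem_bseqs (leq_trans (size_le_sumn Hp) Hn) /=.
apply/allP => x Hx; rewrite (allP Hp x Hx) /=.
exact: leq_trans (leq_sumn_mem Hx) Hn.
Qed.

Definition symbol := (nat * (seq (seq nat) * seq (seq nat)))%type.

Definition candidates k n : seq symbol :=
  [seq (D, p) | D <- iota 0 n.+1,
                p <- [seq (al, be) | al <- seqs_len k (bseqs n), be <- seqs_len k (bseqs n)]].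

Definition weight (D : nat) (al be : seq (seq nat)) : nat :=
  sumn (map sumn al) + sumn (map sumn be) + D ^ 2.

Lemma uniq_candidates k n : uniq (candidates k n).
Proof.
have U := uniq_seqs_len k (uniq_bseqs n).
apply: allpairs_uniq; first exact: iota_uniq.
- by apply: allpairs_uniq => // -[x1 s1] [x2 s2] _ _ /= [-> ->].
- by move=> [x1 s1] [x2 s2] _ _ /= [-> ->].
Qed.

Lemma mem_candidates k n D al be : size al = k -> size be = k ->
  all is_partition al -> all is_partition be -> weight D al be = n ->
  (D, (al, be)) \in candidates k n.
Proof.
move=> Ha Hb Pa Pb Hw.
have in_seqs (ga : seq (seq nat)) : size ga = k -> all is_partition ga ->
    sumn (map sumn ga) <= n -> ga \in seqs_len k (bseqs n).
  move=> Hs Hp Hn; rewrite mem_seqs_len Hs eqxx /=; apply/allP => a Ha'.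
  apply: partition_in_bseqs; first exact: (allP Hp).
  exact: leq_trans (leq_sumn_mem (map_f _ Ha')) Hn.
apply/allpairsP; exists (D, (al, be)); split => //.
- rewrite [_.1]/= mem_iota add0n ltnS -Hw /weight.
  apply: leq_trans (leq_addl _ _); case: D {Hw} => // D.
  by rewrite expnS expn1 leq_pmulr.
- apply/allpairsP; exists (al, be); split => //=; apply: in_seqs => //;
    move: Hw; rewrite /weight; lia.
Qed.

Lemma candidates_size k n D al be :
  (D, (al, be)) \in candidates k n -> size al = k /\ size be = k.
Proof.
case/allpairsP => -[D' p] [_ /= Hp [_ Ep]]; subst p.
case/allpairsP: Hp => -[al' be'] [/= H1 H2 [-> ->]].
by move: H1 H2; rewrite !mem_seqs_len => /andP[/eqP -> _] /andP[/eqP -> _].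
Qed.

Lemma geq_trans : transitive geq.
Proof. by move=> y x z /= H1 H2; exact: leq_trans H2 H1. Qed.

Lemma sorted_nth_le s i j : sorted geq s -> i <= j -> nth 0 s j <= nth 0 s i.
Proof.
move=> Hs Hij; case: (ltnP j (size s)) => Hj; last by rewrite nth_default.
apply: (sorted_leq_nth geq_trans (fun x => leqnn x) 0 Hs) => //.
by rewrite inE (leq_ltn_trans Hij Hj).
Qed.

Lemma all_geq0 (s : seq nat) : all (fun x => 0 <= x) s.
Proof. by apply/allP. Qed.

Lemma largest_nth s : largest s = nth 0 s 0.
Proof. by case: s. Qed.

Lemma mem_le_largest s x : sorted geq s -> x \in s -> x <= largest s.
Proof. by move=> Hs /(nthP 0) [i _ <-]; rewrite largest_nth; exact: sorted_nth_le. Qed.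

Lemma all_nth_le D s i : all (fun x => x <= D) s -> nth 0 s i <= D.
Proof.
move=> H; case: (ltnP i (size s)) => Hi; last by rewrite nth_default.
exact: (allP H) (mem_nth 0 Hi).
Qed.

Lemma sorted_cat_geq y x : sorted geq y -> sorted geq x ->
  (forall a b, a \in y -> b \in x -> b <= a) -> sorted geq (y ++ x).
Proof.
case: y => [|y0 y'] //= Hy Hx H.
rewrite cat_path Hy /=; case: x Hx H => [|x0 x'] //= Hx H.
by rewrite Hx andbT; apply: H; [exact: mem_last | exact: mem_head].
Qed.

Lemma all_take_drop (T : Type) (P : pred T) n s :
  all P s -> all P (take n s) && all P (drop n s).
Proof. by rewrite -{1}(cat_take_drop n s) all_cat. Qed.

Lemma partition_take_drop n s :
  is_partition s -> is_partition (take n s) && is_partition (drop n s).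
Proof.
case/andP => Hs Hp; case/andP: (all_take_drop n Hp) => H1 H2.
by rewrite /is_partition take_sorted // drop_sorted // H1 H2.
Qed.

(* A recursive description of strict shifted Durfee symbols, as the list of
   their vectors (alpha^i, beta^i) together with their ranks.  The bound c
   is the largest part of the previous alpha, below which no part may go. *)
Definition vec_ok (c D : nat) (a b : seq nat) : bool :=
  [&& is_partition a, is_partition b,
      all (fun x => c <= x) a, all (fun x => c <= x) b,
      all (fun x => x <= D) a & all (fun x => x <= D) b].

(* A vector (a, b) other than the last one, of rank m. *)
Definition inner_ok (c D : nat) (a b : seq nat) (m : nat) : bool :=
  [&& vec_ok c D a b, a != [::], all (fun x => x <= largest a) b,
      strict_shifted a b & size a == size b + m + 1].

(* The last vector (a, b), of rank m. *)
Definition outer_ok (c D : nat) (a b : seq nat) (m : nat) : bool :=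
  vec_ok c D a b && (size a == size b + m).

Fixpoint ss_vectors (c D : nat) (vs : seq (seq nat * seq nat)) (ms : seq nat) : bool :=
  match vs, ms with
  | (a, b) :: vs', m :: ms' =>
    if vs' is [::] then (ms' == [::]) && outer_ok c D a b m
    else inner_ok c D a b m && ss_vectors (largest a) D vs' ms'
  | _, _ => false
  end.

Lemma ss_vectors_cons c D a b vs m ms : vs != [::] ->
  ss_vectors c D ((a, b) :: vs) (m :: ms) = inner_ok c D a b m && ss_vectors (largest a) D vs ms.
Proof. by case: vs. Qed.

Fixpoint inner_chain (c D : nat) (vs : seq (seq nat * seq nat)) (ms : seq nat) : bool :=
  match vs, ms with
  | [::], [::] => true
  | (a, b) :: vs', m :: ms' => inner_ok c D a b m && inner_chain (largest a) D vs' ms'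
  | _, _ => false
  end.

Fixpoint chain_floor (c : nat) (vs : seq (seq nat * seq nat)) : nat :=
  if vs is (a, _) :: vs' then chain_floor (largest a) vs' else c.

Lemma ss_vectors_cat c D vs ms X Y : size vs = size ms -> X != [::] ->
  ss_vectors c D (vs ++ X) (ms ++ Y) =
  inner_chain c D vs ms && ss_vectors (chain_floor c vs) D X Y.
Proof.
elim: vs c ms => [|[a b] vs IH] c [|m ms] //= [Hs] HX.
case E: (vs ++ X) => [|y z].
  by move: (congr1 size E); rewrite size_cat; case: X HX {IH E} => //= x X' _; rewrite addnS.
by rewrite -E IH // andbA.
Qed.

Definition floor_at (c : nat) (al : seq (seq nat)) (i : nat) : nat :=
  if i is j.+1 then largest (nth [::] al j) else c.

Definition kmds_cond (c D : nat) (al be : seq (seq nat)) (m : seq nat) : bool :=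
  let k := size al in
  [&& all is_partition al, all is_partition be,
      all (fun i => (i.+1 < k) ==> ((nth [::] al i != [::]) &&
                     all (fun b => b <= largest (nth [::] al i)) (nth [::] be i))) (iota 0 k),
      all (fun i => all (fun a => floor_at c al i <= a) (nth [::] al i) &&
                    all (fun b => floor_at c al i <= b) (nth [::] be i)) (iota 0 k),
      all (all (fun a => a <= D)) al, all (all (fun b => b <= D)) be,
      all (fun i => (i.+1 < k) ==> strict_shifted (nth [::] al i) (nth [::] be i)) (iota 0 k) &
      all (fun i => kmds_rank k al be i == Posz (nth 0 m i)) (iota 0 k)].

(* Closes an identity between two conjunctions of the same boolean atoms by
   case analysis on the atoms. *)
Ltac bool_cases := repeat (match goal with |- context[?x && ?y] =>
   lazymatch x with true => fail | false => fail | _ => case: x end end;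
   rewrite ?andbT ?andbF ?andTb ?andFb //).

Lemma all_iotaS (P : pred nat) k :
  all P (iota 0 k.+1) = P 0 && all (fun i => P i.+1) (iota 0 k).
Proof. by rewrite /= (iotaDl 1 0) all_map. Qed.

Lemma rank_eq_inner x y m : ((Posz x - Posz y - 1)%R == Posz m) = (x == y + m + 1).
Proof. by rewrite !subr_eq -!PoszD eqz_nat addnC addnA. Qed.

Lemma rank_eq_outer x y m : ((Posz x - Posz y)%R == Posz m) = (x == y + m).
Proof. by rewrite !subr_eq -!PoszD eqz_nat addnC. Qed.

Lemma kmds_cond_cons c D a al b be m0 m :
  kmds_cond c D (a :: al) (b :: be) (m0 :: m) =
  [&& is_partition a, is_partition b,
      (0 < size al) ==> ((a != [::]) && all (fun x => x <= largest a) b),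
      all (fun x => c <= x) a, all (fun x => c <= x) b,
      all (fun x => x <= D) a, all (fun x => x <= D) b,
      (0 < size al) ==> strict_shifted a b,
      kmds_rank (size al).+1 (a :: al) (b :: be) 0 == Posz m0 &
      kmds_cond (largest a) D al be m].
Proof.
have shift : all (fun i => all (leq (largest (nth [::] (a :: al) i))) (nth [::] al i) &&
                            all (leq (largest (nth [::] (a :: al) i))) (nth [::] be i))
                  (iota 0 (size al)) =
             all (fun i => all (fun x => floor_at (largest a) al i <= x) (nth [::] al i) &&
                           all (fun x => floor_at (largest a) al i <= x) (nth [::] be i))
                  (iota 0 (size al)).
  by apply: eq_all => -[|i].
rewrite {1}/kmds_cond (_ : size (a :: al) = (size al).+1) //.
rewrite !all_iotaS shift /= /kmds_cond -!andbA.
by bool_cases.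
Qed.

Lemma kmds_cond_ss_vectors c D al be m :
  size be = size al -> size m = size al -> 0 < size al ->
  kmds_cond c D al be m = ss_vectors c D (zip al be) m.
Proof.
elim: al c be m => [|a al IH] c [|b be] [|m0 m] // [Hb] [Hm] _.
rewrite kmds_cond_cons.
case: al IH Hb Hm => [|a' al] IH Hb Hm.
  case: be Hb => // _; case: m Hm => // _.
  by rewrite /kmds_rank /= /outer_ok /vec_ok rank_eq_outer !andbT -!andbA; bool_cases.
case: be Hb => [//|b' be] Hb.
rewrite (_ : zip _ _ = (a, b) :: zip (a' :: al) (b' :: be)) //.
rewrite ss_vectors_cons // -IH //= /kmds_rank /= rank_eq_inner.
by rewrite /inner_ok /vec_ok -!andbA; bool_cases.
Qed.

Definition ss_symbol (k : nat) (ms : seq nat) (n : nat) (t : symbol) : bool :=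
  let: (D, (al, be)) := t in
  [&& size al == k, size be == k, ss_vectors 0 D (zip al be) ms & weight D al be == n].

Lemma floor_at0 (al be : seq (seq nat)) k :
  all (fun i => (0 < i) ==>
         (all (fun a => largest (nth [::] al i.-1) <= a) (nth [::] al i) &&
          all (fun b => largest (nth [::] al i.-1) <= b) (nth [::] be i))) (iota 0 k) =
  all (fun i => all (fun a => floor_at 0 al i <= a) (nth [::] al i) &&
                all (fun b => floor_at 0 al i <= b) (nth [::] be i)) (iota 0 k).
Proof.
by apply: eq_all => -[|i] //=; rewrite !all_geq0.
Qed.

Lemma Dss_count_ss_symbol k m n : 0 < k -> size m = k ->
  Dss k m n = count (ss_symbol k m n) (candidates k n).
Proof.
move=> k0 Hm; apply: eq_in_count => -[D [al be]] Hin.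
have [Ha Hb] := candidates_size Hin.
rewrite /ss_symbol Ha Hb !eqxx /= -kmds_cond_ss_vectors ?Ha ?Hb //.
rewrite /is_ss_kmds /is_kmds /kmds_cond Ha Hb !eqxx floor_at0 /weight /= -!andbA.
by bool_cases.
Qed.

Lemma ss_symbol_candidate k m n t : 0 < k -> size m = k ->
  ss_symbol k m n t -> t \in candidates k n.
Proof.
case: t => D [al be] k0 Hm /and4P[/eqP Ha /eqP Hb Hv /eqP Hw].
move: Hv; rewrite -kmds_cond_ss_vectors ?Ha ?Hb // => /and3P[Pa Pb _].
exact: mem_candidates.
Qed.

(* [last_failure P n] is the least u <= n such that P holds on [u, n), i.e.
   one past the last index below n where P fails, or 0 if there is none. *)
Fixpoint last_failure (P : pred nat) (n : nat) : nat :=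
  if n is n'.+1 then (if P n' then last_failure P n' else n) else 0.

Lemma last_failure_le (P : pred nat) n : last_failure P n <= n.
Proof. by elim: n => //= n IH; case: (P n) => //; exact: leq_trans IH _. Qed.

Lemma last_failure_after (P : pred nat) n i : last_failure P n <= i < n -> P i.
Proof.
elim: n => [|n IH] /=; first by rewrite ltn0.
case Pn: (P n) => /andP[H1 H2]; last by move: (leq_trans H1 H2); rewrite ltnn.
case: (eqVneq i n) => [-> //|Hne]; apply: IH.
by rewrite H1 ltn_neqAle Hne -ltnS.
Qed.

Lemma last_failure_fails (P : pred nat) n :
  0 < last_failure P n -> ~~ P (last_failure P n).-1.
Proof. by elim: n => //= n IH; case Pn: (P n) => //= _; rewrite Pn. Qed.

Lemma last_failure_unique (P : pred nat) n u : u <= n ->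
  (forall i, u <= i < n -> P i) -> (0 < u -> ~~ P u.-1) -> last_failure P n = u.
Proof.
elim: n => [|n IH] Hu Hall Hf /=; first by case: u Hu {Hall Hf}.
case: (eqVneq u n.+1) => [Hun|Hne].
  by move: Hf; rewrite Hun /= => /(_ isT) /negbTE ->.
have Hun : u <= n by rewrite -ltnS ltn_neqAle Hne Hu.
rewrite Hall ?Hun ?ltnSn //; apply: IH => // i /andP[H1 H2].
by apply: Hall; rewrite H1 leqW.
Qed.

(* In a merged last vector (A, B) whose
   upper part should have rank m2, the split point s is the least index
   such that B_j < A_(j+m2+1) for all s <= j < l(B); the two recovered
   vectors are (drop (s+m2) A, drop s B) and (take (s+m2) A, take s B). *)
Definition shifted_at (A B : seq nat) (m2 : nat) : pred nat :=
  fun j => nth 0 B j < nth 0 A (j + m2).+1.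

Definition split_point (A B : seq nat) (m2 : nat) : nat :=
  last_failure (shifted_at A B m2) (size B).

Lemma inner_ok_floor c D x u m : inner_ok c D x u m -> c <= largest x.
Proof. by case/and3P=> /and3P[_ _ /andP[cx _]] nx _; move: nx cx; case: x => // x0 x' _ /andP[]. Qed.

Lemma merge_outer_ok c D x u y v m1 m2 :
  inner_ok c D x u m1 -> outer_ok (largest x) D y v m2 ->
  outer_ok c D (y ++ x) (v ++ u) (m1 + m2 + 1).
Proof.
move=> Hin; have cx := inner_ok_floor Hin.
case/and5P: Hin => /and3P[px pu /and4P[lx lu dx du]] _ ub _ /eqP sx.
case/andP=> /and3P[py pv /and4P[ly lv dy dv]] /eqP sy.
case/andP: px => sox posx; case/andP: pu => sou posu.
case/andP: py => soy posy; case/andP: pv => sov posv.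
rewrite /outer_ok /vec_ok /is_partition !all_cat !size_cat.
rewrite posx posu posy posv lx lu dx du dy dv !andbT /=.
apply/andP; split; last by apply/eqP; rewrite sx sy; clear; lia.
apply/and4P; split.
- apply: sorted_cat_geq => // a b Ha Hb.
  exact: leq_trans (mem_le_largest sox Hb) (allP ly a Ha).
- apply: sorted_cat_geq => // a b Ha Hb.
  exact: leq_trans (allP ub b Hb) (allP lv a Ha).
- by apply/allP => a Ha; exact: leq_trans cx (allP ly a Ha).
- by apply/allP => a Ha; exact: leq_trans cx (allP lv a Ha).
Qed.

Lemma split_point_merge c D x u y v m1 m2 :
  inner_ok c D x u m1 -> outer_ok (largest x) D y v m2 ->
  split_point (y ++ x) (v ++ u) m2 = size v.
Proof.
case/and5P=> _ _ _ /andP[_ /allP ss] /eqP sx; case/andP=> /and3P[_ _ /and4P[_ lv _ _]] /eqP sy.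
apply: last_failure_unique; first by rewrite size_cat leq_addr.
- move=> i /andP[H1 H2]; rewrite /shifted_at !nth_cat (_ : i < size v = false); last first.
    by rewrite ltnNge H1.
  rewrite (_ : (i + m2).+1 < size y = false); last by apply/negbTE; rewrite -leqNgt; lia.
  rewrite (_ : (i + m2).+1 - size y = (i - size v).+1); last by lia.
  by apply: ss; rewrite mem_iota add0n leq0n /=; move: H2; rewrite size_cat; lia.
- move=> Hv; have Hlt : (size v).-1 < size v by rewrite prednK.
  rewrite /shifted_at nth_cat Hlt -leqNgt nth_cat.
  rewrite (_ : ((size v).-1 + m2).+1 = size y); last by lia.
  by rewrite ltnn subnn -largest_nth; apply: (allP lv); exact: mem_nth.
Qed.

Lemma vec_ok_drop c D A B i j : vec_ok c D A B -> vec_ok c D (drop i A) (drop j B).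
Proof.
case/and3P=> pA pB /and4P[lA lB dA dB]; rewrite /vec_ok.
case/andP: (partition_take_drop i pA) => _ ->; case/andP: (partition_take_drop j pB) => _ ->.
by rewrite (andP (all_take_drop i lA)).2 (andP (all_take_drop j lB)).2
           (andP (all_take_drop i dA)).2 (andP (all_take_drop j dB)).2.
Qed.

Lemma split_inner_ok c D A B m1 m2 : outer_ok c D A B (m1 + m2 + 1) ->
  inner_ok c D (drop (split_point A B m2 + m2) A) (drop (split_point A B m2) B) m1.
Proof.
case/andP=> HA /eqP sAB.
have Hs : split_point A B m2 <= size B := last_failure_le _ _.
set s := split_point A B m2 in Hs *.
have sizes : size (drop (s + m2) A) = size (drop s B) + m1 + 1.
  by rewrite !size_drop sAB; move: Hs; clear; lia.
have shifted j : j < size (drop s B) -> nth 0 (drop s B) j < nth 0 (drop (s + m2) A) j.+1.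
  move=> Hj; rewrite !nth_drop (_ : s + m2 + j.+1 = (s + j + m2).+1); last by clear; lia.
  apply: (@last_failure_after (shifted_at A B m2) (size B)); rewrite leq_addr /=.
  by move: Hj; rewrite size_drop; move: Hs; clear; lia.
have soA : sorted geq (drop (s + m2) A) by case/and3P: HA => /andP[/drop_sorted].
rewrite /inner_ok /strict_shifted vec_ok_drop // -size_eq0 sizes addn1 ltnS leq_addr eqxx andbT /=.
apply/andP; split; last by apply/allP => j; rewrite mem_iota add0n => /andP[_ /shifted].
apply/allP => b /(nthP 0) [j Hj <-]; apply: ltnW; apply: leq_trans (shifted j Hj) _.
by rewrite largest_nth; apply: sorted_nth_le.
Qed.

Lemma split_outer_ok c D A B m1 m2 : outer_ok c D A B (m1 + m2 + 1) ->
  outer_ok (largest (drop (split_point A B m2 + m2) A)) D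
           (take (split_point A B m2 + m2) A) (take (split_point A B m2) B) m2.
Proof.
case/andP=> /and3P[pA pB /and4P[_ _ dA dB]] /eqP sAB.
have Hs : split_point A B m2 <= size B := last_failure_le _ _.
set s := split_point A B m2 in Hs *.
have soA : sorted geq A by case/andP: pA.
have soB : sorted geq B by case/andP: pB.
have lgst : largest (drop (s + m2) A) = nth 0 A (s + m2) by rewrite largest_nth nth_drop addn0.
have ltn_take (s' : seq nat) i l : i < size (take l s') -> i < l.
  by rewrite size_take_min => /leq_trans; apply; exact: geq_minl.
rewrite /outer_ok /vec_ok (andP (partition_take_drop _ pA)).1 (andP (partition_take_drop _ pB)).1.
rewrite (andP (all_take_drop _ dA)).1 (andP (all_take_drop _ dB)).1 !size_takel ?andbT; last 2 first.
- exact: Hs.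
- by rewrite sAB; move: Hs; clear; lia.
rewrite eqxx andbT lgst /=; apply/andP; split.
- apply/allP => a /(nthP 0) [i Hi <-]; rewrite nth_take ?(ltn_take _ _ _ Hi) //.
  by apply: sorted_nth_le => //; apply: ltnW; exact: ltn_take Hi.
- apply/allP => b /(nthP 0) [i Hi <-]; have Hi' := ltn_take _ _ _ Hi; rewrite nth_take //.
  have s0 : 0 < s by apply: leq_ltn_trans Hi'.
  have := @last_failure_fails (shifted_at A B m2) (size B) s0.
  rewrite -/s /shifted_at -leqNgt -addSn prednK // => H; apply: leq_trans H _.
  by apply: sorted_nth_le => //; rewrite -ltnS prednK.
Qed.

Lemma seq_last2 (T : Type) k (s : seq T) : size s = k.+2 ->
  exists s0 x y, size s0 = k /\ s = s0 ++ [:: x; y].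
Proof.
elim: k s => [|k IH] [|x s] //=.
  by case: s => [|y [|z t]] // _; exists [::], x, y.
by case=> /IH [s0 [y [z [H1 ->]]]]; exists (x :: s0), y, z; rewrite /= H1.
Qed.

Lemma seq_last1 (T : Type) k (s : seq T) : size s = k.+1 ->
  exists s0 x, size s0 = k /\ s = s0 ++ [:: x].
Proof.
elim: k s => [|k IH] [|x s] //=.
  by case: s => [|y t] // _; exists [::], x.
by case=> /IH [s0 [y [H1 ->]]]; exists (x :: s0), y; rewrite /= H1.
Qed.

Lemma nth_cat_size0 (T : Type) (d : T) k s x t : size s = k -> nth d (s ++ x :: t) k = x.
Proof. by move=> <-; elim: s. Qed.

Lemma nth_cat_size1 (T : Type) (d : T) k s x y t :
  size s = k -> nth d (s ++ x :: y :: t) k.+1 = y.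
Proof. by move=> <-; elim: s. Qed.

Definition merge_last (k0 : nat) (t : symbol) : symbol :=
  let: (D, (al, be)) := t in
  (D, (take k0 al ++ [:: nth [::] al k0.+1 ++ nth [::] al k0],
       take k0 be ++ [:: nth [::] be k0.+1 ++ nth [::] be k0])).

Definition split_last (k0 m2 : nat) (t : symbol) : symbol :=
  let: (D, (al, be)) := t in
  let A := nth [::] al k0 in let B := nth [::] be k0 in
  let s := split_point A B m2 in
  (D, (take k0 al ++ [:: drop (s + m2) A; take (s + m2) A],
       take k0 be ++ [:: drop s B; take s B])).

Lemma ss_vectors_last1 c D al0 be0 ms A B m : size al0 = size ms -> size be0 = size ms ->
  ss_vectors c D (zip (al0 ++ [:: A]) (be0 ++ [:: B])) (ms ++ [:: m]) =
  inner_chain c D (zip al0 be0) ms && outer_ok (chain_floor c (zip al0 be0)) D A B m.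
Proof.
move=> Ha Hb; have Hz : size (zip al0 be0) = size ms by rewrite size_zip Ha Hb minnn.
by rewrite zip_cat ?Ha ?Hb // ss_vectors_cat.
Qed.

Lemma ss_vectors_last2 c D al0 be0 ms x y u v m1 m2 :
  size al0 = size ms -> size be0 = size ms ->
  ss_vectors c D (zip (al0 ++ [:: x; y]) (be0 ++ [:: u; v])) (ms ++ [:: m1; m2]) =
  [&& inner_chain c D (zip al0 be0) ms,
      inner_ok (chain_floor c (zip al0 be0)) D x u m1 & outer_ok (largest x) D y v m2].
Proof.
move=> Ha Hb; have Hz : size (zip al0 be0) = size ms by rewrite size_zip Ha Hb minnn.
by rewrite zip_cat ?Ha ?Hb // ss_vectors_cat //= andbT.
Qed.

Lemma merge_last_ok k0 ms m1 m2 n t : size ms = k0 ->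
  ss_symbol k0.+2 (ms ++ [:: m1; m2]) n t ->
  ss_symbol k0.+1 (ms ++ [:: m1 + m2 + 1]) n (merge_last k0 t) /\
  split_last k0 m2 (merge_last k0 t) = t.
Proof.
case: t => D [al be] Hms /and4P[/eqP /seq_last2 [al0 [x [y [Ha0 ->]]]]
                               /eqP /seq_last2 [be0 [u [v [Hb0 ->]]]] Hv /eqP Hw].
move: Hv; rewrite ss_vectors_last2 ?Ha0 ?Hb0 // => /and3P[Hc Hx Hy].
rewrite /merge_last !take_size_cat // !(nth_cat_size0 _ _ _ Ha0) !(nth_cat_size1 _ _ _ _ Ha0).
rewrite (nth_cat_size0 _ _ _ Hb0) (nth_cat_size1 _ _ _ _ Hb0).
split.
- rewrite /ss_symbol !size_cat Ha0 Hb0 /= addn1 !eqxx ss_vectors_last1 ?Ha0 ?Hb0 // Hc.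
  rewrite (merge_outer_ok Hx Hy) /=; apply/eqP; rewrite -Hw /weight.
  by rewrite !map_cat !sumn_cat /= !sumn_cat; clear; lia.
- rewrite /split_last !take_size_cat // (nth_cat_size0 _ _ _ Ha0) (nth_cat_size0 _ _ _ Hb0).
  rewrite (split_point_merge Hx Hy).
  have sy : size y = size v + m2 by case/andP: Hy => _ /eqP.
  by rewrite -sy !take_size_cat // !drop_size_cat.
Qed.

Lemma split_last_ok k0 ms m1 m2 n t : size ms = k0 ->
  ss_symbol k0.+1 (ms ++ [:: m1 + m2 + 1]) n t ->
  ss_symbol k0.+2 (ms ++ [:: m1; m2]) n (split_last k0 m2 t) /\
  merge_last k0 (split_last k0 m2 t) = t.
Proof.
case: t => D [al be] Hms /and4P[/eqP /seq_last1 [al0 [A [Ha0 ->]]]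
                               /eqP /seq_last1 [be0 [B [Hb0 ->]]] Hv /eqP Hw].
move: Hv; rewrite ss_vectors_last1 ?Ha0 ?Hb0 // => /andP[Hc HAB].
rewrite /split_last !take_size_cat // (nth_cat_size0 _ _ _ Ha0) (nth_cat_size0 _ _ _ Hb0).
set s := split_point A B m2.
split.
- rewrite /ss_symbol !size_cat Ha0 Hb0 /= addn2 !eqxx ss_vectors_last2 ?Ha0 ?Hb0 // Hc.
  rewrite (split_inner_ok HAB) (split_outer_ok HAB) /=; apply/eqP; rewrite -Hw /weight.
  rewrite !map_cat !sumn_cat /= -{3}(cat_take_drop (s + m2) A) -{3}(cat_take_drop s B).
  by rewrite !sumn_cat; clear; lia.
- rewrite /merge_last !take_size_cat // !(nth_cat_size0 _ _ _ Ha0) (nth_cat_size1 _ _ _ _ Ha0).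
  by rewrite (nth_cat_size0 _ _ _ Hb0) (nth_cat_size1 _ _ _ _ Hb0) !cat_take_drop.
Qed.

Lemma Dss_merge k0 ms m1 m2 n : size ms = k0 ->
  Dss k0.+2 (ms ++ [:: m1; m2]) n = Dss k0.+1 (ms ++ [:: m1 + m2 + 1]) n.
Proof.
move=> Hms.
have E2 : size (ms ++ [:: m1; m2]) = k0.+2 by rewrite size_cat Hms /= addn2.
have E1 : size (ms ++ [:: m1 + m2 + 1]) = k0.+1 by rewrite size_cat Hms /= addn1.
rewrite !Dss_count_ss_symbol //.
apply: (@count_bij _ _ _ _ _ _ (merge_last k0) (split_last k0 m2)).
- exact: uniq_candidates.
- exact: uniq_candidates.
- by move=> t; apply: ss_symbol_candidate.
- by move=> t; apply: ss_symbol_candidate.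
- by move=> t; apply: merge_last_ok.
- by move=> t; apply: split_last_ok.
Qed.

(* Conjugate partitions.  [columns L s] lists the first L column lengths of
   the Ferrers diagram of s; the conjugate of s lists all of them. *)
Definition columns (L : nat) (s : seq nat) : seq nat :=
  [seq count (fun x => j < x) s | j <- iota 0 L].

Definition conjugate (s : seq nat) : seq nat := columns (largest s) s.

Lemma nth_columns s L j : j < L -> nth 0 (columns L s) j = count (fun x => j < x) s.
Proof. by move=> H; rewrite (nth_map 0) ?size_iota // nth_iota. Qed.

Lemma sorted_map_iota (f : nat -> nat) m L : (forall i, f i.+1 <= f i) ->
  sorted geq [seq f j | j <- iota m L].
Proof.
move=> H; elim: L m => [|L IH] m //=.
by case: L IH => [|L] IH //=; rewrite H /=; exact: (IH m.+1).
Qed.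

Lemma sorted_columns L s : sorted geq (columns L s).
Proof. by apply: sorted_map_iota => i; apply: sub_count => x /=; exact: ltnW. Qed.

Lemma count_lt_iota x L : count (fun j => j < x) (iota 0 L) = minn x L.
Proof.
elim: L => [|L IH]; first by rewrite minn0.
rewrite -addn1 iotaD count_cat IH /= add0n addn0 addn1.
by case: (ltnP L x) => h; rewrite ?h /=; lia.
Qed.

Lemma count_gt_nth s i j : sorted geq s -> (i < count (fun x => j < x) s) = (j < nth 0 s i).
Proof.
elim: s i => [|x s IH] i Hs /=; first by rewrite nth_nil.
have Hs' : sorted geq s := path_sorted Hs.
have allx : all (geq x) s := order_path_min geq_trans Hs.
case: (ltnP j x) => hj; first by rewrite add1n; case: i => [|i] //=; rewrite ltnS IH.
have c0 : count (fun y => j < y) s = 0.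
  apply/eqP; rewrite -leqn0 leqNgt -has_count; apply/hasPn => y Hy.
  by rewrite -leqNgt (leq_trans _ hj) //; exact: (allP allx y Hy).
rewrite c0 ltn0; apply/esym/negbTE; rewrite -leqNgt; apply: leq_trans _ hj.
exact: (@sorted_nth_le (x :: s) 0 i Hs).
Qed.

Lemma count_columns s L i : sorted geq s ->
  count (fun y => i < y) (columns L s) = minn (nth 0 s i) L.
Proof.
by move=> Hs; rewrite /columns count_map -count_lt_iota; apply: eq_count => j /=; rewrite count_gt_nth.
Qed.

Lemma sumn_columns L s : all (fun x => x <= L) s -> sumn (columns L s) = sumn s.
Proof.
elim: s => [|x s IH] /=; first by rewrite /columns; elim: (iota 0 L) => //= j r ->.
move=> /andP[hx hs]; rewrite /columns /=.
have split_sum (f g : nat -> nat) r :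
    sumn [seq f j + g j | j <- r] = sumn [seq f j | j <- r] + sumn [seq g j | j <- r].
  by elim: r => //= y r ->; rewrite addnACA.
rewrite (split_sum (fun j => nat_of_bool (j < x)) (fun j => count (fun y => j < y) s)).
by rewrite sumn_count count_lt_iota (minn_idPl hx) IH.
Qed.

Lemma conjugate_columns D a : all (fun x => 0 < x) a -> all (fun x => x <= D) a ->
  sorted geq a -> conjugate (columns D a) = a.
Proof.
move=> posa da soa.
have head_cols : largest (columns D a) = size a.
  case: (posnP D) => [D0|D0].
    by subst D; case: a posa da {soa} => //= x a' /andP[px _] /andP[]; rewrite leqNgt px.
  rewrite largest_nth nth_columns //; apply/eqP; rewrite -all_count.
  by apply: sub_all posa => x.
rewrite /conjugate head_cols; apply: (@eq_from_nth _ 0); first by rewrite size_map size_iota.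
move=> j; rewrite size_map size_iota => Hj; rewrite nth_columns // count_columns //.
by apply/minn_idPl; apply: all_nth_le.
Qed.

Lemma columns_conjugate mu : sorted geq mu -> columns (size mu) (conjugate mu) = mu.
Proof.
move=> somu; apply: (@eq_from_nth _ 0); first by rewrite size_map size_iota.
move=> j; rewrite size_map size_iota => Hj.
rewrite nth_columns // count_columns //; apply/minn_idPl.
by apply: mem_le_largest => //; exact: mem_nth.
Qed.

(* The Durfee square.  [durfee l] is the first index i with l_i <= i; for a
   partition it is the side of the largest square in its Ferrers diagram. *)
Definition durfee (l : seq nat) : nat := find (fun i => nth 0 l i <= i) (iota 0 (size l)).

Lemma find_eq (T : Type) (a : pred T) x0 s d :
  (forall i, i < d -> ~~ a (nth x0 s i)) -> (d < size s -> a (nth x0 s d)) -> d <= size s ->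
  find a s = d.
Proof.
elim: s d => [|x s IH] [|d] //= H1 H2 H3; first by rewrite H2.
rewrite (negbTE (H1 0 isT)); congr S; apply: IH => // i Hi.
exact: (H1 i.+1).
Qed.

Lemma durfee_le_size l : durfee l <= size l.
Proof. by rewrite /durfee; apply: leq_trans (find_size _ _) _; rewrite size_iota. Qed.

Lemma durfee_above l i : i < durfee l -> i < nth 0 l i.
Proof.
move=> H; have Hi : i < size l := leq_trans H (durfee_le_size l).
by have := before_find 0 H; rewrite nth_iota // add0n => /negbT; rewrite -ltnNge.
Qed.

Lemma durfee_at l : nth 0 l (durfee l) <= durfee l.
Proof.
case: (ltnP (durfee l) (size l)) => H; last by rewrite nth_default.
have Hh : has (fun i => nth 0 l i <= i) (iota 0 (size l)) by rewrite has_find size_iota.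
by have := nth_find 0 Hh; rewrite nth_iota.
Qed.

Lemma durfee_unique l D : D <= size l ->
  (forall i, i < D -> i < nth 0 l i) -> nth 0 l D <= D -> durfee l = D.
Proof.
move=> HD Habove Hat; apply: (@find_eq _ _ 0).
- by move=> i Hi; rewrite nth_iota ?(leq_trans Hi) // add0n -ltnNge Habove.
- by rewrite size_iota => Hi; rewrite nth_iota.
- by rewrite size_iota.
Qed.

Lemma durfee_rows_above l i : sorted geq l -> i < durfee l -> durfee l <= nth 0 l i.
Proof.
move=> Hs H; have D0 : 0 < durfee l by apply: leq_ltn_trans H.
have := @durfee_above l (durfee l).-1; rewrite ltn_predL prednK // => /(_ D0) H1.
by apply: leq_trans H1 _; apply: sorted_nth_le => //; rewrite -ltnS prednK.
Qed.

Lemma durfee_rows_below l i : sorted geq l -> durfee l <= i -> nth 0 l i <= durfee l.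
Proof. by move=> Hs H; apply: leq_trans (durfee_at l); exact: sorted_nth_le. Qed.

(* The first D rows of the partition with Durfee square of side D whose
   columns to the right of the square have lengths given by a. *)
Definition arm (D : nat) (a : seq nat) : seq nat := [seq D + x | x <- columns D a].

Lemma size_arm D a : size (arm D a) = D.
Proof. by rewrite !size_map size_iota. Qed.

Lemma nth_arm D a j : j < D -> nth 0 (arm D a) j = D + count (fun x => j < x) a.
Proof. by move=> H; rewrite (nth_map 0) ?size_map ?size_iota // nth_columns. Qed.

Lemma sumn_add_const D s : sumn [seq D + x | x <- s] = D * size s + sumn s.
Proof. by elim: s => [|x s IH] /=; rewrite ?muln0 // IH mulnS addnACA. Qed.

Lemma sumn_arm D a : all (fun x => x <= D) a -> sumn (arm D a) = D ^ 2 + sumn a.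
Proof.
by move=> da; rewrite sumn_add_const sumn_columns // size_map size_iota mulnn.
Qed.

Lemma durfee_arm D a b : all (fun x => x <= D) b -> durfee (arm D a ++ b) = D.
Proof.
move=> db; apply: durfee_unique; first by rewrite size_cat size_arm leq_addr.
- by move=> i Hi; rewrite nth_cat size_arm Hi nth_arm // ltn_addr.
- by rewrite nth_cat size_arm ltnn subnn; apply: all_nth_le.
Qed.

Lemma partition_arm D a b : is_partition b -> all (fun x => x <= D) b ->
  is_partition (arm D a ++ b).
Proof.
case/andP=> sob posb db; rewrite /is_partition all_cat posb andbT; apply/andP; split.
- apply: sorted_cat_geq => //.
    by rewrite sorted_map; apply: sub_sorted (sorted_columns D a) => x y /=; rewrite leq_add2l.
  move=> y z /mapP [x _ ->] Hz; exact: leq_trans (allP db z Hz) (leq_addr _ _).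
- apply/allP => y /mapP [x /mapP [j Hj _] ->]; apply: ltn_addr.
  by move: Hj; rewrite mem_iota; case: (D).
Qed.

Lemma prank_arm D a b : all (fun x => 0 < x) a -> all (fun x => x <= D) a ->
  all (fun x => 0 < x) b -> all (fun x => x <= D) b ->
  prank (arm D a ++ b) = (Posz (size a) - Posz (size b))%R.
Proof.
move=> posa da posb db; case: (posnP D) => [D0|D0].
  subst D; have nil0 s : all (fun x => 0 < x) s -> all (fun x => x <= 0) s -> s = [::].
    by case: s => //= x s /andP[px _] /andP[]; rewrite leqNgt px.
  by rewrite (nil0 a posa da) (nil0 b posb db).
rewrite /prank size_cat size_arm largest_nth nth_cat size_arm D0 nth_arm //.
have -> : count (fun x => 0 < x) a = size a by apply/eqP; rewrite -all_count.
by clear; lia.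
Qed.

Lemma size_conjugate mu : size (conjugate mu) = largest mu.
Proof. by rewrite size_map size_iota. Qed.

Lemma partition_conjugate mu : sorted geq mu -> is_partition (conjugate mu).
Proof.
move=> somu; rewrite /is_partition sorted_columns; apply/allP => y /mapP [j Hj ->].
move: Hj; rewrite mem_iota add0n => /andP[_ Hj].
rewrite -has_count; apply/hasP; exists (largest mu) => //.
by case: mu Hj {somu} => // x s _; exact: mem_head.
Qed.

Lemma conjugate_bounded mu : all (fun x => x <= size mu) (conjugate mu).
Proof. by apply/allP => y /mapP [j _ ->]; exact: count_size. Qed.

Lemma sumn_conjugate mu : sorted geq mu -> sumn (conjugate mu) = sumn mu.
Proof. by move=> somu; apply: sumn_columns; apply/allP => x; exact: mem_le_largest. Qed.

Definition excess (l : seq nat) : seq nat := [seq x - durfee l | x <- take (durfee l) l].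

Lemma size_excess l : size (excess l) = durfee l.
Proof. by rewrite size_map size_takel ?durfee_le_size. Qed.

Lemma sorted_excess l : sorted geq l -> sorted geq (excess l).
Proof.
move=> sol; rewrite sorted_map; apply: (@sub_sorted _ geq); last exact: take_sorted.
by move=> x y /= H; apply: leq_sub2r.
Qed.

Lemma excess_shift l : sorted geq l -> [seq durfee l + x | x <- excess l] = take (durfee l) l.
Proof.
move=> sol; rewrite -map_comp; apply: map_id_in => x /(nthP 0) [i Hi <-] /=.
rewrite size_takel ?durfee_le_size // in Hi.
by rewrite subnKC // nth_take // durfee_rows_above.
Qed.

Lemma largest_excess l : 0 < durfee l -> largest (excess l) = largest l - durfee l.
Proof.
move=> D0; rewrite !largest_nth (nth_map 0) ?nth_take //.
by rewrite size_takel ?durfee_le_size.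
Qed.

Definition symbol_to_partition (t : symbol) : seq nat :=
  let: (D, (al, be)) := t in arm D (head [::] al) ++ head [::] be.

Definition partition_to_symbol (l : seq nat) : symbol :=
  (durfee l, ([:: conjugate (excess l)], [:: drop (durfee l) l])).

Definition rank_partition (R n : nat) (l : seq nat) : bool :=
  [&& is_partition l, sumn l == n & prank l == Posz R].

Lemma ss_symbol1 R n D a b : ss_symbol 1 [:: R] n (D, ([:: a], [:: b])) =
  [&& vec_ok 0 D a b, size a == size b + R & sumn a + sumn b + D ^ 2 == n].
Proof. by rewrite /ss_symbol /= /outer_ok /weight /= !addn0 andbA. Qed.

Lemma symbol_to_partition_ok R n t : ss_symbol 1 [:: R] n t ->
  rank_partition R n (symbol_to_partition t) /\ partition_to_symbol (symbol_to_partition t) = t.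
Proof.
case: t => D [[|a [|? ?]] [|b [|? ?]]] //; rewrite ss_symbol1.
case/and3P=> /and3P[pa pb /and4P[_ _ da db]] /eqP sab /eqP Hw.
have [soa posa] := andP pa; have [sob posb] := andP pb.
split.
- rewrite /rank_partition /= partition_arm // sumn_cat sumn_arm // prank_arm // sab.
  by apply/andP; split; apply/eqP; move: Hw; clear; lia.
- rewrite /partition_to_symbol /excess /= durfee_arm // take_size_cat ?size_arm //.
  rewrite drop_size_cat ?size_arm //.
  have -> : [seq x - D | x <- arm D a] = columns D a.
    by rewrite /arm -map_comp; apply: map_id_in => x _ /=; rewrite addKn.
  by rewrite conjugate_columns.
Qed.

Lemma partition_to_symbol_ok R n l : rank_partition R n l ->
  ss_symbol 1 [:: R] n (partition_to_symbol l) /\ symbol_to_partition (partition_to_symbol l) = l.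
Proof.
case/and3P=> pl /eqP Hs /eqP Hr; have [sol posl] := andP pl.
have armE : arm (durfee l) (conjugate (excess l)) = take (durfee l) l.
  have cols : columns (durfee l) (conjugate (excess l)) = excess l.
    by rewrite -{1}(size_excess l) columns_conjugate ?sorted_excess.
  by rewrite /arm cols excess_shift.
split; last by rewrite /symbol_to_partition /partition_to_symbol /= armE cat_take_drop.
rewrite /partition_to_symbol ss_symbol1; set D := durfee l.
have HD : D <= size l := durfee_le_size l.
have pdrop : is_partition (drop D l) by case/andP: (partition_take_drop D pl).
have drop_le : all (fun x => x <= D) (drop D l).
  apply/allP => y /(nthP 0) [i _ <-]; rewrite nth_drop.
  by apply: durfee_rows_below => //; exact: leq_addr.
apply/and3P; split.
- have conj_le : all (fun x => x <= D) (conjugate (excess l)).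
    by rewrite /D -(size_excess l) conjugate_bounded.
  by rewrite /vec_ok partition_conjugate ?sorted_excess // pdrop drop_le conj_le !all_geq0.
- rewrite size_conjugate size_drop; apply/eqP.
  have Hr' : largest l = size l + R by move/eqP: Hr; rewrite /prank rank_eq_outer => /eqP.
  case: (posnP D) => [D0|D0].
    have l0 : l = [::].
      by move: (durfee_at l) posl; rewrite -/D D0; case: (l) => //= x l' hx /andP[]; rewrite ltnNge hx.
    by move: Hr'; rewrite D0 l0 /= => <-.
  by rewrite largest_excess // Hr'; move: HD; clear; lia.
- have sumE : sumn l = sumn (take D l) + sumn (drop D l) by rewrite -sumn_cat cat_take_drop.
  rewrite sumn_conjugate ?sorted_excess // -Hs sumE -excess_shift // sumn_add_const size_excess.
  by rewrite mulnn; apply/eqP; clear; lia.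
Qed.

Lemma Dss1 R n : Dss 1 [:: R] n = Nrank (Posz R) n.
Proof.
rewrite (@Dss_count_ss_symbol 1 [:: R] n) //.
apply: (@count_bij _ _ _ _ _ _ symbol_to_partition partition_to_symbol).
- exact: uniq_candidates.
- exact: uniq_bseqs.
- by move=> t; apply: ss_symbol_candidate.
- by move=> s /and3P[ps /eqP sn _]; apply: partition_in_bseqs; rewrite ?sn.
- by move=> t; apply: symbol_to_partition_ok.
- by move=> s; apply: partition_to_symbol_ok.
Qed.

Lemma Dss_Nrank k m n : size m = k.+1 -> Dss k.+1 m n = Nrank (Posz (sumn m + k)) n.
Proof.
elim: k m => [|k IH] m Hm.
  by case: m Hm => [|R [|]] // _; rewrite Dss1 /= !addn0.
have [ms [m1 [m2 [Hms ->]]]] := seq_last2 Hm.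
rewrite Dss_merge // IH; last by rewrite size_cat Hms /= addn1.
by rewrite !sumn_cat /=; congr (Nrank (Posz _) n); clear; lia.
Qed.

Unset Implicit Arguments.

Theorem mainTheorem3 (k n : nat) (m : seq nat) :
  0 < k -> size m = k ->
  Dss k m n = Nrank (Posz (sumn m + k - 1)) n.
Proof. by case: k => [//|k] _ Hm; rewrite Dss_Nrank // addnS subn1. Qed.
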